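(* Let $r\in\mathbb N$, let $M$ be the sub-add move matrix, and let $\Delta$ be the subgraph of $\Gamma_{M,\,2^r}$ induced on $V(\Gamma_{M,\,2^r})\setminus\{(0,0)\}$. Then $\Delta$ is an inverted $PBT_d$ of depth $d=2r-1$. Moreover, $\Gamma_{M,\,2^r}$ is obtained from $\Delta$ by adding the vertex $(0,0)$ together with the two arcs $((2^{r-1},2^{r-1}),(0,0))$ and $((0,0),(0,0))$.
   Context: The sub-add move matrix is $M=\begin{pmatrix}1&-1\\1&1\end{pmatrix}$. For $n\in\mathbb N$, $\Gamma_{M,\,n}$ is the directed graph with vertex set $\mathbb Z_n^2$ and arcs $((a,b),(a-b,a+b))$ for all $(a,b)\in\mathbb Z_n^2$ (computed mod $n$; loops allowed). A perfect binary tree $PBT_d$ is a rooted binary tree in which every non-leaf node has exactly two children and all leaves are at the same depth $d$; it is regarded as directed so that there is a unique directed path from the root (the unique parentless node) to each leaf. It is called inverted if the orientation of every arc is reversed. *)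

From HB Require Import structures.
From mathcomp Require Import all_boot all_order all_algebra.
Set Implicit Arguments. Unset Strict Implicit. Unset Printing Implicit Defensive.
Import GRing.Theory.
Local Open Scope ring_scope.

(* The move graph Gamma_{M,n}: vertices Z_n^2, arcs (u, M u) computed mod n.
   (Only meaningful for n >= 2, since 'Z_n is Z/max(n,2).) *)
Definition move (n : nat) (M : 'M[int]_2) (u : 'Z_n * 'Z_n) : 'Z_n * 'Z_n :=
  ((M 0 0)%:~R * u.1 + (M 0 1)%:~R * u.2,
   (M 1 0)%:~R * u.1 + (M 1 1)%:~R * u.2).

Definition Gamma_arc (n : nat) (M : 'M[int]_2) (u v : 'Z_n * 'Z_n) : bool :=
  v == move M u.

Definition subadd : 'M[int]_2 :=
  \matrix_(i < 2, j < 2) (if (i == 0) && (j == 1) then -1 else 1).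

Definition nonzero_vertex (n : nat) := {u : 'Z_n * 'Z_n | u != (0, 0)}.

Definition Delta_arc (n : nat) (M : 'M[int]_2) (x y : nonzero_vertex n) : bool :=
  Gamma_arc M (sval x) (sval y).

(* Canonical perfect binary tree PBT_d: nodes are binary words of length <= d
   (the word records the left/right choices from the root, root = [::]);
   arcs go from a node s to its two children b :: s. *)
Definition pbt_node (d : nat) := {s : seq bool | size s <= d}%N.

Definition pbt_arc (d : nat) (s t : pbt_node d) : Prop :=
  exists b : bool, sval t = b :: sval s.

Definition is_inverted_PBT (V : Type) (e : V -> V -> Prop) (d : nat) : Prop :=
  exists f : V -> pbt_node d,
    bijective f /\ forall x y : V, e x y <-> pbt_arc (f y) (f x).

From HB Require Import structures.
From mathcomp Require Import all_boot all_order all_algebra.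
From mathcomp Require Import zify.
Set Implicit Arguments. Unset Strict Implicit. Unset Printing Implicit Defensive.
Import GRing.Theory.
Local Open Scope ring_scope.

(* Reading (a, b) as a + b i in Z[i]/(2^r), the sub-add move is multiplication
   by 1 + i.  Its square is multiplication by 2i, so 2r moves send every vertex
   to (0,0), and 2r - 1 moves kill exactly the image of the move, i.e. the y
   with y.1 - y.2 even.  The kernel of the move is {(0,0), (h,h)} with
   h = 2^(r-1), so every vertex of the image has exactly two preimages, which
   differ by (h,h) and hence by the top bit of their first coordinate.  Reading
   these top bits along the path from a nonzero vertex up to the root (h,h)
   gives it an address, a binary word of length at most 2r - 1; addresses are
   a bijection onto such words under which arcs drop the first letter. *)

Lemma inj_surj_bij (A : choiceType) (B : eqType) (f : A -> B) :
  injective f -> (forall b, exists a, f a = b) -> bijective f.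
Proof.
move=> f_inj f_surj.
have f_surjb b : exists a, f a == b by have [a <-] := f_surj b; exists a.
exists (fun b => xchoose (f_surjb b)) => [a|b].
  by apply: f_inj; apply/eqP/(xchooseP (f_surjb (f a))).
exact/eqP/(xchooseP (f_surjb b)).
Qed.

Section TreeAddress.

Variables (T : choiceType) (g : T -> T) (z : T) (c : T -> bool) (d : nat).
Hypothesis g_fix : g z = z.
Hypothesis g_nilpotent : forall u, iter d.+1 g u = z.
Hypothesis fiber_inj : forall u v, g u = g v -> c u = c v -> u = v.
Hypothesis fiber_surj :
  forall y b, iter d g y = z -> exists2 x, g x = y & c x = b.

Fixpoint address (k : nat) (u : T) : seq bool :=
  if k is k'.+1 then (if g u == z then [::] else c u :: address k' (g u))
  else [::].

Lemma iter_fix_after k j u : (k <= j)%N -> iter k g u = z -> iter j g u = z.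
Proof. by move=> /subnK <- uz; rewrite iterD uz iter_fix. Qed.

Lemma size_address k u : (size (address k u) <= k)%N.
Proof. by elim: k u => [|k IH] u //=; case: ifP => //= _; rewrite ltnS. Qed.

Lemma address_succ k u : iter k.+1 g u = z -> address k.+1 u = address k u.
Proof.
elim: k u => [/= u -> | k IH u]; first by rewrite eqxx.
by rewrite iterSr => /IH /= ->.
Qed.

Lemma root_unique u v : u != z -> v != z -> g u = z -> g v = z -> u = v.
Proof.
have c_root w : w != z -> g w = z -> c w != c z.
  by move=> wz gw; apply: contra_neq wz => /fiber_inj; apply; rewrite gw g_fix.
move=> uz vz gu gv; apply: fiber_inj; first by rewrite gu gv.
move: (c_root u uz gu) (c_root v vz gv).
by case: (c u); case: (c v); case: (c z).
Qed.

Lemma address_inj k u v : u != z -> v != z ->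
  iter k.+1 g u = z -> iter k.+1 g v = z -> address k u = address k v -> u = v.
Proof.
elim: k u v => [|k IH] u v uz vz.
  by move=> /= gu gv _; exact: root_unique gu gv.
rewrite [iter k.+2 g u]iterSr [iter k.+2 g v]iterSr /=.
have [gu|guz] := eqVneq (g u) z; have [gv|gvz] := eqVneq (g v) z => //.
  by move=> _ _ _; exact: root_unique gu gv.
by move=> Hu Hv [cuv /(IH _ _ guz gvz Hu Hv) guv]; exact: fiber_inj guv cuv.
Qed.

Lemma address_surj k w : (size w <= k <= d)%N ->
  exists u, [/\ u != z, iter (size w).+1 g u = z & address k u = w].
Proof.
elim: w k => [|b w IH] k /andP [wk kd].
  have [x gx cx] := fiber_surj (~~ c z) (iter_fix d g_fix).
  have xz : x != z by apply/eqP => xz; move: cx; rewrite xz; case: (c z).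
  by exists x; split=> //; case: k {wk kd} => //= k; rewrite gx eqxx.
case: k wk kd => // k; rewrite ltnS => wk kd.
have /IH [y [yz Hy yw]] : (size w <= k <= d)%N by rewrite wk ltnW.
have [x gx cx] := fiber_surj b (iter_fix_after (leq_ltn_trans wk kd) Hy).
have xz : x != z by apply: contra_neq yz => xz; rewrite -gx xz g_fix.
exists x; split=> //; first by rewrite iterSr gx.
by rewrite /= gx (negPf yz) cx yw.
Qed.

Lemma address_arc x y : x != z -> y != z ->
  y = g x <-> exists b, address d x = b :: address d y.
Proof.
move=> xz yz; rewrite -(address_succ (g_nilpotent x)) /=.
have [gxz|gxz] := eqVneq (g x) z.
  by split=> [yx|[]//]; rewrite yx gxz eqxx in yz.
split=> [-> | [_ [_ /address_inj]]]; first by exists (c x).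
by move=> /(_ gxz yz (g_nilpotent _) (g_nilpotent _)) ->.
Qed.

Theorem address_inverted_PBT :
  is_inverted_PBT (fun x y : {u : T | u != z} => sval y == g (sval x)) d.
Proof.
pose f (x : {u : T | u != z}) : pbt_node d :=
  exist _ (address d (sval x)) (size_address d (sval x)).
exists f; split.
  apply: inj_surj_bij.
    move=> [x xz] [y yz] /(congr1 sval) /= xy; apply: val_inj => /=.
    exact: address_inj xy.
  move=> [w wd]; have /address_surj [u [uz _ uw]] : (size w <= d <= d)%N.
    by rewrite wd leqnn.
  by exists (exist _ u uz); apply: val_inj.
move=> [x xz] [y yz] /=; rewrite /pbt_arc /=.
by split=> [/eqP/(address_arc xz yz) | /(address_arc xz yz)/eqP].
Qed.

End TreeAddress.

Lemma pair_mulrn (U V : zmodType) (u : U * V) k : u *+ k = (u.1 *+ k, u.2 *+ k).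
Proof. by elim: k => // k IH; rewrite !mulrS IH. Qed.

Section SubAdd.

Variable V : zmodType.

Definition sub_add (u : V * V) : V * V := (u.1 - u.2, u.1 + u.2).

Definition quarter_turn (u : V * V) : V * V := (- u.2, u.1).

Lemma sub_add_is_zmod_morphism : zmod_morphism sub_add.
Proof.
by move=> [a b] [a' b']; congr pair; rewrite /= ?opprD ?opprK addrACA.
Qed.

HB.instance Definition _ :=
  GRing.isZmodMorphism.Build (V * V)%type (V * V)%type sub_add
    sub_add_is_zmod_morphism.

Lemma quarter_turn_is_zmod_morphism : zmod_morphism quarter_turn.
Proof. by move=> [a b] [a' b']; rewrite /quarter_turn /= opprD. Qed.

HB.instance Definition _ :=
  GRing.isZmodMorphism.Build (V * V)%type (V * V)%type quarter_turn
    quarter_turn_is_zmod_morphism.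

Lemma sub_add_twice u : sub_add (sub_add u) = quarter_turn (u *+ 2).
Proof.
case: u => a b; rewrite mulr2n; congr pair => /=.
  by rewrite !opprD addrACA subrr add0r.
by rewrite addrACA addNr addr0.
Qed.

Lemma iter_quarter_turn_mulrn k m u :
  iter k quarter_turn (u *+ m) = iter k quarter_turn u *+ m.
Proof. by elim: k => //= k ->; rewrite raddfMn. Qed.

Lemma iter_quarter_turn_eq0 k u : iter k quarter_turn u = 0 -> u = 0.
Proof.
elim: k => //= k IH; case E: (iter k quarter_turn u) => [a b] [/eqP].
by rewrite oppr_eq0 => /eqP b0 a0; apply: IH; rewrite E a0 b0.
Qed.

Lemma iter_sub_add_double k u :
  iter k.*2 sub_add u = iter k quarter_turn (u *+ 2 ^ k).
Proof.
elim: k => [|k IH]; first by rewrite mulr1n.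
by rewrite doubleS /= IH sub_add_twice -iter_quarter_turn_mulrn -mulrnA -expnSr.
Qed.

End SubAdd.

Arguments sub_add {V} u.
Arguments quarter_turn {V} u.

Lemma Zp_natr_eq0 p k : (1 < p)%N -> ((k%:R : 'Z_p) == 0) = (p %| k)%N.
Proof. by move=> p_gt1; rewrite -val_eqE /= val_Zp_nat. Qed.

Section EvenModulus.

Variables m n : nat.
Hypotheses (m_gt0 : (0 < m)%N) (n_double : n = (2 * m)%N).

Local Notation half := (m%:R : 'Z_n).

Let n_gt1 : (1 < n)%N. Proof. by rewrite n_double; lia. Qed.

Lemma Zp_val_lt (a : 'Z_n) : (a < n)%N.
Proof. by apply: leq_trans (ltn_ord a) _; rewrite Zp_cast. Qed.

Lemma Zp_half_double : half + half = 0.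
Proof. by rewrite -natrD addnn -mul2n -n_double pchar_Zp. Qed.

Lemma Zp_double_eq0 (a : 'Z_n) : a + a = 0 -> a = 0 \/ a = half.
Proof.
rewrite -(natr_Zp a) -natrD => /eqP; rewrite Zp_natr_eq0 //.
move: (Zp_val_lt a); move: (a : nat) => k + k_dvd; rewrite n_double in k_dvd *.
move: k_dvd; rewrite addnn -mul2n dvdn_pmul2l // => /dvdnP [q ->].
by rewrite ltn_pmul2r //; case: q => [|[|]] // _; [left | right; rewrite mul1n].
Qed.

Lemma Zp_mulrn_half_eq0 (a : 'Z_n) : a *+ m = 0 -> exists b : 'Z_n, a = b *+ 2.
Proof.
rewrite -(natr_Zp a) -mulrnA => /eqP.
rewrite Zp_natr_eq0 //; move: (a : nat) => k.
rewrite [X in (X %| _)%N]n_double dvdn_pmul2r // => /dvdnP [q ->].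
by exists q%:R; rewrite mulrnA.
Qed.

Definition upper_half (a : 'Z_n) : bool := (m <= a)%N.

Lemma upper_half_addh (a : 'Z_n) : upper_half (a + half) = ~~ upper_half a.
Proof.
rewrite /upper_half -[in a + _](natr_Zp a) -natrD val_Zp_nat //.
have := Zp_val_lt a.
move: (a : nat) => k; rewrite n_double => k_lt; case: (leqP m k) => k_m /=.
  by rewrite -(subnK k_m) -addnA addnn -mul2n modnDr modn_small; lia.
by rewrite modn_small; lia.
Qed.

End EvenModulus.

Section PowerOfTwoModulus.

Variable s : nat.

Local Notation n := (2 ^ s.+1)%N.
Local Notation half := ((2 ^ s)%:R : 'Z_n).
Local Notation upper u := (upper_half (2 ^ s) u.1).

Let half_gt0 : (0 < 2 ^ s)%N. Proof. by rewrite expn_gt0. Qed.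
Let n_double : n = (2 * 2 ^ s)%N. Proof. exact: expnS. Qed.

Lemma sub_add_eq0 (u : 'Z_n * 'Z_n) :
  sub_add u = 0 -> u = 0 \/ u = (half, half).
Proof.
case: u => a b /eqP; rewrite xpair_eqE /= subr_eq0 => /andP [/eqP -> /eqP].
move=> /(Zp_double_eq0 half_gt0 n_double).
by case=> ->; [left | right].
Qed.

Lemma sub_add_half : sub_add (half, half) = 0.
Proof. by rewrite /sub_add /= subrr Zp_half_double. Qed.

Lemma sub_add_nilpotent (u : 'Z_n * 'Z_n) : iter s.+1.*2 sub_add u = 0.
Proof.
have n_gt1 : (1 < n)%N by rewrite n_double; lia.
case: u => a b; rewrite iter_sub_add_double pair_mulrn /=.
rewrite -(mulr_natr a) -(mulr_natr b) pchar_Zp // !mulr0.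
by rewrite iter_fix // /quarter_turn /= oppr0.
Qed.

Lemma sub_add_image (y : 'Z_n * 'Z_n) :
  iter s.*2.+1 sub_add y = 0 -> exists x : 'Z_n * 'Z_n, sub_add x = y.
Proof.
(* As quarter_turn is injective, 2^s (y.1 - y.2) = 0: y.1 - y.2 is even. *)
rewrite iterSr iter_sub_add_double => /iter_quarter_turn_eq0 /(congr1 fst).
rewrite pair_mulrn /= => /(Zp_mulrn_half_eq0 half_gt0 n_double) [a].
case: y => y1 y2 /= /eqP; rewrite subr_eq => /eqP ->.
exists (a + y2, - a).
by rewrite /sub_add /= opprK addrAC -mulr2n [a + y2]addrC addrK.
Qed.

Lemma sub_add_fiber_inj (u v : 'Z_n * 'Z_n) :
  sub_add u = sub_add v -> upper u = upper v -> u = v.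
Proof.
move=> /eqP; rewrite -subr_eq0 -raddfB => /eqP /sub_add_eq0 [/eqP | uv].
  by rewrite subr_eq0 => /eqP.
rewrite -[u](subrK v) uv /= addrC upper_half_addh //.
by case: (upper v).
Qed.

Lemma sub_add_fiber_surj (y : 'Z_n * 'Z_n) b :
  iter s.*2.+1 sub_add y = 0 ->
  exists2 x : 'Z_n * 'Z_n, sub_add x = y & upper x = b.
Proof.
move=> /sub_add_image [x xy].
have [<-|xb] := eqVneq (upper x) b; first by exists x.
exists (x + (half, half)); first by rewrite raddfD /= sub_add_half addr0.
by rewrite /= upper_half_addh //; move: xb; case: b; case: (upper x).
Qed.

End PowerOfTwoModulus.

Lemma move_subadd n (u : 'Z_n * 'Z_n) : move subadd u = sub_add u.
Proof. by rewrite /move /subadd !mxE /= !mul1r mulN1r. Qed.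

Theorem theorem5p6 (r : nat) (hr : (1 <= r)%N) :
  is_inverted_PBT (fun x y : nonzero_vertex (2 ^ r) => Delta_arc subadd x y)
    (2 * r - 1)%N /\
  (forall u v : 'Z_(2 ^ r) * 'Z_(2 ^ r),
     Gamma_arc subadd u v <->
       [\/ u != (0, 0) /\ v != (0, 0) /\ Gamma_arc subadd u v,
           u = ((2 ^ (r - 1))%:R, (2 ^ (r - 1))%:R) /\ v = (0, 0)
         | u = (0, 0) /\ v = (0, 0)]).
Proof.
case: r hr => // s _; have gE := @move_subadd (2 ^ s.+1).
rewrite subSS subn0 (_ : 2 * s.+1 - 1 = s.*2.+1)%N; last first.
  by rewrite mul2n doubleS subn1.
split.
  apply: (address_inverted_PBT (c := fun u => upper_half (2 ^ s) u.1))
    => [|u|u v|y b].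
  - by rewrite gE raddf0.
  - by rewrite (eq_iter gE) sub_add_nilpotent.
  - by rewrite !gE; exact: sub_add_fiber_inj.
  - rewrite (eq_iter gE) => /(sub_add_fiber_surj b) [x xy xb].
    by exists x; rewrite ?gE.
move=> u v; rewrite /Gamma_arc gE.
split=> [/eqP vE | [[_ [_ //]] | [-> ->] | [-> ->]]].
- have [u0|u0] := eqVneq u (0, 0); first by constructor 3; rewrite vE u0 raddf0.
  have [v0|v0] := eqVneq v (0, 0); last by constructor 1; rewrite vE eqxx.
  constructor 2; split=> //.
  have [u0'|//] := sub_add_eq0 (etrans (esym vE) v0).
  by rewrite u0' eqxx in u0.
- by rewrite sub_add_half.
- by rewrite raddf0.
Qed.
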